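(* Let $r\ge 2$ and $2\le s\le r$ be integers and let $H$ be a linear $r$-uniform hypergraph. Then \[ q(H)\le \frac{1}{\binom{r-1}{s-1}}\,q(\partial_s H). \] In particular, $(r-1)\,q(H)\le q(\partial H)$, where $q(\partial H)$ is the largest eigenvalue of the signless Laplacian matrix of the graph $\partial H$.
   Context: An $r$-uniform hypergraph ($r$-graph) $H$ has a finite vertex set $V(H)$ and a set $E(H)$ of $r$-element subsets of $V(H)$. It is linear if any two distinct edges share at most one vertex. $d_H(v)$ is the number of edges containing $v$. For an $r$-graph $H$ on $n$ vertices, its signless Laplacian spectral radius is \[ q(H)=\max_{\mathbf{x}\in\mathbb{R}^n,\ \|\mathbf{x}\|_r=1}\Big(\sum_{v\in V(H)}d_H(v)x_v^r + r\sum_{e\in E(H)}\prod_{v\in e}x_v\Big), \] where $\|\mathbf{x}\|_r=(\sum_v|x_v|^r)^{1/r}$. The $s$-shadow $\partial_s H$ is the $s$-graph on $V(H)$ whose edges are all $s$-subsets contained in some edge of $H$; $\partial H=\partial_2 H$ (a graph, for which $q$ coincides with the largest eigenvalue of $D+A$). *)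

From HB Require Import structures.
From mathcomp Require Import all_boot all_order all_algebra.
From mathcomp Require Import classical_sets reals.
Set Implicit Arguments. Unset Strict Implicit. Unset Printing Implicit Defensive.
Import Order.TTheory GRing.Theory Num.Theory.

Local Open Scope ring_scope.
Local Open Scope classical_set_scope.

(* A hypergraph on vertex set T is given by its edge set E : {set {set T}}. *)

Definition uniform (T : finType) (r : nat) (E : {set {set T}}) : Prop :=
  forall e, e \in E -> #|e| = r.

Definition linear_hg (T : finType) (E : {set {set T}}) : Prop :=
  forall e f, e \in E -> f \in E -> e != f -> (#|e :&: f| <= 1)%N.

Definition hdeg (T : finType) (E : {set {set T}}) (v : T) : nat :=
  #|[set e in E | v \in e]|.

Definition shadow (T : finType) (s : nat) (E : {set {set T}}) : {set {set T}} :=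
  [set S : {set T} | (#|S| == s) && [exists e in E, S \subset e]].

Definition qform (R : realType) (T : finType) (r : nat) (E : {set {set T}})
    (x : T -> R) : R :=
  \sum_(v : T) (hdeg E v)%:R * x v ^+ r + r%:R * \sum_(e in E) \prod_(v in e) x v.

(* signless Laplacian spectral radius of the r-graph E:
   maximum of qform over the unit sphere of the r-norm
   (||x||_r = 1  iff  sum_v |x_v|^r = 1). *)
Definition qrad (R : realType) (T : finType) (r : nat) (E : {set {set T}}) : R :=
  sup [set qform r E x | x in [set x : T -> R | \sum_(v : T) `|x v| ^+ r = 1]].

From HB Require Import structures.
From mathcomp Require Import all_boot all_order all_algebra.
From mathcomp Require Import classical_sets reals exp.
(* classical_sets shadows [subsetP]: restore the finite-set version. *)
From mathcomp Require Import fintype finset.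
Import Order.TTheory GRing.Theory Num.Theory.

(* Given x on the unit r-sphere, y_v := |x_v|^(r/s) lies on the unit s-sphere.
   By linearity every s-set of the shadow lies in exactly one edge, so the
   shadow form at y splits into one sum per edge e, over the C(r,s) s-subsets
   of e.  Each vertex of e lies in C(r-1,s-1) of them, which matches the degree
   terms exactly, and AM-GM over these s-subsets gives
   r C(r-1,s-1) prod_e |x_v| <= s sum_S prod_S y_v, since the product of all
   the prod_S y_v is (prod_e |x_v|)^C(r,s). *)

Set Implicit Arguments.
Unset Strict Implicit.
Unset Printing Implicit Defensive.
Local Open Scope ring_scope.

Section Draws.
Variable T : finType.

Definition draws (e : {set T}) (s : nat) : {set {set T}} :=
  [set S : {set T} | S \subset e & #|S| == s].

Lemma card_draws_mem (e : {set T}) (s : nat) (v : T) : v \in e -> (0 < s)%N ->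
  #|[set S in draws e s | v \in S]| = 'C(#|e|.-1, s.-1).
Proof.
move=> ve s_gt0.
have notin_sub (A : {set T}) : A \subset e :\ v -> v \notin A.
  by move=> Aev; apply/negP => /(subsetP Aev); rewrite !inE eqxx.
have -> : [set S in draws e s | v \in S] =
          (fun A => v |: A) @: draws (e :\ v) s.-1.
  apply/setP=> S; rewrite !inE; apply/idP/imsetP.
  - case/andP=> /andP[Se /eqP cardS] vS; exists (S :\ v); last by rewrite setD1K.
    rewrite !inE setSD //=; move: (cardsD1 v S).
    by rewrite vS cardS add1n => ->.
  - case=> A; rewrite !inE => /andP[Aev /eqP cardA] ->.
    rewrite setU11 andbT subUset sub1set ve (subset_trans Aev (subsetDl _ _)) /=.
    by rewrite cardsU1 (notin_sub _ Aev) cardA add1n prednK.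
rewrite card_in_imset; last first.
  move=> A B; rewrite !inE => /andP[/notin_sub vA _] /andP[/notin_sub vB _] eqAB.
  by rewrite -(setU1K vA) eqAB setU1K.
by rewrite cards_draws; move: (cardsD1 v e); rewrite ve add1n => ->.
Qed.

Lemma big_draws_exchange (R : Type) (idx : R) (op : Monoid.com_law idx)
    (e : {set T}) (s : nat) (F : {set T} -> T -> R) :
  \big[op/idx]_(S in draws e s) \big[op/idx]_(v in S) F S v =
  \big[op/idx]_(v in e) \big[op/idx]_(S in draws e s | v \in S) F S v.
Proof.
rewrite (exchange_big_dep (mem e)) //= => S v; rewrite inE => /andP[/subsetP Se _].
exact: Se.
Qed.

Lemma sum_draws (R : nmodType) (e : {set T}) (s : nat) (g : T -> R) :
  (0 < s)%N ->
  \sum_(S in draws e s) \sum_(v in S) g v =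
  (\sum_(v in e) g v) *+ 'C(#|e|.-1, s.-1).
Proof.
move=> s_gt0; rewrite big_draws_exchange -sumrMnl; apply: eq_bigr => v ve.
rewrite (eq_bigl (mem [set S in draws e s | v \in S])) ?sumr_const ?card_draws_mem //.
by move=> S; rewrite !inE.
Qed.

Lemma prod_draws (R : comPzSemiRingType) (e : {set T}) (s : nat) (g : T -> R) :
  (0 < s)%N ->
  \prod_(S in draws e s) \prod_(v in S) g v =
  \prod_(v in e) g v ^+ 'C(#|e|.-1, s.-1).
Proof.
move=> s_gt0; rewrite big_draws_exchange; apply: eq_bigr => v ve.
rewrite (eq_bigl (mem [set S in draws e s | v \in S])) ?prodr_const ?card_draws_mem //.
by move=> S; rewrite !inE.
Qed.

End Draws.

Section Shadow.
Variables (T : finType) (E : {set {set T}}) (s : nat).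
Hypotheses (s_ge2 : (2 <= s)%N) (linE : linear_hg E).

Lemma shadow_edge_unique (S e f : {set T}) :
  e \in E -> f \in E -> S \in draws e s -> S \subset f -> e = f.
Proof.
move=> eE fE; rewrite inE => /andP[Se /eqP cardS] Sf; apply/eqP.
apply: contraTT s_ge2 => neq_ef; rewrite -ltnNge ltnS -cardS.
apply: leq_trans _ (linE eE fE neq_ef).
by rewrite subset_leq_card // subsetI Se Sf.
Qed.

Lemma big_shadow (R : Type) (idx : R) (op : Monoid.com_law idx)
    (F : {set T} -> R) :
  \big[op/idx]_(S in shadow s E) F S =
  \big[op/idx]_(e in E) \big[op/idx]_(S in draws e s) F S.
Proof.
rewrite (exchange_big_dep (fun S : {set T} => #|S| == s)) /=; last first.
  by move=> e S _; rewrite inE => /andP[].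
rewrite big_mkcond [RHS]big_mkcond /=; apply: eq_bigr => S _; rewrite inE.
case: (boolP (#|S| == s)) => //= cardS.
case: (boolP [exists e in E, S \subset e]) => [/existsP[e0 /andP[e0E Se0]] | noedge].
- rewrite (big_pred1 e0) // => e; apply/andP/eqP => [[eE SeS] | ->].
    exact: shadow_edge_unique eE e0E SeS Se0.
  by rewrite e0E inE Se0 cardS.
- rewrite big_pred0 // => e; apply/andP => -[eE]; rewrite inE => /andP[Se _].
  by case/negP: noedge; apply/existsP; exists e; rewrite eE.
Qed.

End Shadow.

Section EdgeInequality.
Variables (R : numFieldType) (T : finType) (e : {set T}) (r s : nat).
Variables (x y : T -> R).
Hypotheses (s_gt0 : (0 < s)%N) (s_le_r : (s <= r)%N) (card_e : #|e| = r).
Hypotheses (x_ge0 : forall v, 0 <= x v) (y_ge0 : forall v, 0 <= y v).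
Hypothesis yXs : forall v, y v ^+ s = x v ^+ r.

Lemma edge_AGM :
  (r * 'C(r.-1, s.-1))%:R * \prod_(v in e) x v
  <= s%:R * \sum_(S in draws e s) \prod_(v in S) y v.
Proof.
set c := 'C(r.-1, s.-1); set N := 'C(r, s).
have rc_sN : (r * c = s * N)%N by rewrite mul_bin_diag prednK.
have N_gt0 : (0 < N)%N by rewrite bin_gt0.
have yXc v : y v ^+ c = x v ^+ N.
  apply: (pexpIrn s_gt0); rewrite ?nnegrE ?exprn_ge0 //.
  by rewrite -exprM mulnC exprM yXs -!exprM rc_sN mulnC.
have card_draws : #|draws e s| = N by rewrite cards_draws card_e.
have prod_y_ge0 (S : {set T}) : 0 <= \prod_(v in S) y v by exact: prodr_ge0.
have := (leif_AGM (A := mem (draws e s)) (fun S _ => prod_y_ge0 S)).1.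
rewrite card_draws prod_draws // card_e -/c.
rewrite (eq_bigr _ (fun v _ => yXc v)) prodrXl.
rewrite ler_pXn2r ?nnegrE ?prodr_ge0 ?divr_ge0 ?sumr_ge0 // => AGM.
rewrite rc_sN natrM -mulrA ler_wpM2l // -ler_pdivlMl ?ltr0n //.
by rewrite mulrC.
Qed.

Lemma edge_term_le_draws :
  'C(r.-1, s.-1)%:R * (\sum_(v in e) x v ^+ r + r%:R * \prod_(v in e) x v)
  <= \sum_(S in draws e s) (\sum_(v in S) y v ^+ s + s%:R * \prod_(v in S) y v).
Proof.
rewrite big_split /= sum_draws // card_e -mulr_sumr mulrDr mulrA -natrM mulnC.
by rewrite (eq_bigr _ (fun v _ => yXs v)) mulr_natl lerD // edge_AGM.
Qed.

End EdgeInequality.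

Lemma sum_hdeg (R : pzSemiRingType) (T : finType) (F : {set {set T}}) (a : T -> R) :
  \sum_(v : T) (hdeg F v)%:R * a v = \sum_(e in F) \sum_(v in e) a v.
Proof.
rewrite (exchange_big_dep predT) //=; apply: eq_bigr => v _.
by rewrite mulr_natl -sumr_const; apply: eq_bigl => e; rewrite inE.
Qed.

Section SignlessLaplacianForm.
Variables (R : realType) (T : finType).
Local Open Scope classical_set_scope.

Lemma qform_edges (t : nat) (F : {set {set T}}) (z : T -> R) :
  qform t F z = \sum_(e in F) (\sum_(v in e) z v ^+ t + t%:R * \prod_(v in e) z v).
Proof. by rewrite /qform sum_hdeg big_split /= mulr_sumr. Qed.

Lemma qform_le_norm (t : nat) (F : {set {set T}}) (z : T -> R) :
  qform t F z <= qform t F (fun v => `|z v|).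
Proof.
rewrite /qform lerD // ?ler_wpM2l // ?ler_sum // => [v _ | e _].
  by rewrite ler_wpM2l // -normrX ler_norm.
by rewrite -normr_prod ler_norm.
Qed.

Lemma qform_le_qrad (t : nat) (F : {set {set T}}) (z : T -> R) :
  (0 < t)%N -> \sum_(v : T) `|z v| ^+ t = 1 -> qform t F z <= qrad R t F.
Proof.
move=> t_gt0 z_unit; apply: sup_upper_bound; last by exists z.
split; first by exists (qform t F z), z.
exists (\sum_(v : T) (hdeg F v)%:R + t%:R * #|F|%:R) => _ [w w_unit <-].
have w_le1 v : `|w v| <= 1.
  rewrite -(expr_le1 t_gt0) // -w_unit (bigD1 v) //= lerDl.
  by rewrite sumr_ge0 // => u _; rewrite exprn_ge0.
apply: le_trans (qform_le_norm _ _ _) _.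
rewrite /qform lerD // ?ler_wpM2l // -?sumr_const ?ler_sum // => [v _ | e _].
  by rewrite ler_piMr // exprn_ile1.
by rewrite prodr_ile1 // => v _; rewrite normr_ge0 w_le1.
Qed.

End SignlessLaplacianForm.

Section ShadowComparison.
Variables (R : realType) (T : finType) (E : {set {set T}}) (r s : nat).
Hypotheses (s_ge2 : (2 <= s)%N) (s_le_r : (s <= r)%N).
Hypotheses (unifE : uniform r E) (linE : linear_hg E).
Local Open Scope classical_set_scope.

Lemma qform_le_qrad_shadow (x : T -> R) : \sum_(v : T) `|x v| ^+ r = 1 ->
  qform r E x <= 'C(r.-1, s.-1)%:R^-1 * qrad R s (shadow s E).
Proof.
move=> x_unit.
have s_gt0 : (0 < s)%N by apply: ltnW.
pose y v := `|x v| `^ (r%:R / s%:R).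
have yXs v : y v ^+ s = `|x v| ^+ r.
  rewrite -powR_mulrn ?powR_ge0 // -powRrM divfK ?pnatr_eq0 -?lt0n //.
  by rewrite powR_mulrn.
have y_unit : \sum_(v : T) `|y v| ^+ s = 1.
  by rewrite -x_unit; apply: eq_bigr => v _; rewrite ger0_norm ?powR_ge0.
have C_gt0 : (0 < 'C(r.-1, s.-1))%N by rewrite bin_gt0 -!subn1 leq_sub2r.
apply: le_trans (qform_le_norm _ _ _) _; rewrite ler_pdivlMl ?ltr0n //.
apply: le_trans (qform_le_qrad (shadow s E) s_gt0 y_unit).
rewrite !qform_edges big_shadow // mulr_sumr ler_sum // => e eE.
by apply: edge_term_le_draws => // [|v]; [exact: unifE | exact: powR_ge0].
Qed.

Lemma qrad_le_qrad_shadow :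
  qrad R r E <= 'C(r.-1, s.-1)%:R^-1 * qrad R s (shadow s E).
Proof.
case: (pickP (@predT T)) => [t _ | T_empty]; last first.
  have no_unit (k : nat) :
      [set x : T -> R | \sum_(v : T) `|x v| ^+ k = 1] = classical_sets.set0.
    apply/seteqP; split => // x /=.
    by rewrite big_pred0 // => /eqP; rewrite eq_sym oner_eq0.
  by rewrite /qrad !no_unit !image_set0 sup0 mulr0.
pose delta v : R := (v == t)%:R.
apply: ge_sup => [|_ [x x_unit <-]]; last exact: qform_le_qrad_shadow.
exists (qform r E delta), delta => //=.
rewrite (bigD1 t) //= /delta eqxx normr1 expr1n big1 ?addr0 // => v /negbTE ->.
by rewrite normr0 expr0n gtn_eqF // (leq_trans _ s_le_r) // ltnW.
Qed.

End ShadowComparison.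

Theorem lemma8p1 (R : realType) (T : finType) (r s : nat) (E : {set {set T}}) :
  (2 <= r)%N -> (2 <= s)%N -> (s <= r)%N ->
  uniform r E -> linear_hg E ->
  qrad R r E <= ('C(r.-1, s.-1))%:R^-1 * qrad R s (shadow s E)
  /\ (r.-1)%:R * qrad R r E <= qrad R 2 (shadow 2 E).
Proof.
move=> r_ge2 s_ge2 s_le_r unifE linE; split; first exact: qrad_le_qrad_shadow.
have r1_gt0 : (0 < r.-1)%N by rewrite -subn1 subn_gt0.
have := qrad_le_qrad_shadow R (leqnn 2) r_ge2 unifE linE.
by rewrite bin1 -ler_pdivlMl ?ltr0n.
Qed.
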